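(* Let $m\ge3$, $\theta\in(0,1]$, and let $\hat P$ be the expected normalized profile. Candidate $1$ wins under the Two-Round System in $\hat P$. If $\theta>\frac{m-3}{5m-3}$, the Two-Round System is not CM in $\hat P$ (and not CM in any continuous profile of some neighborhood of $\hat P$). If $\theta<\frac{m-3}{5m-3}$, it is CM in $\hat P$; more precisely, the profile $Q$ obtained from $\hat P$ by reassigning the total weight $\frac{1-\theta}{2}$ of rankings preferring $2$ to $1$ so that a fraction $\frac{2(1-2\theta)}{3(1-\theta)}$ of it goes to ranking $2\succ3\succ\cdots\succ m\succ1$ and a fraction $\frac{1+\theta}{3(1-\theta)}$ goes to ranking $3\succ4\succ\cdots\succ m\succ1\succ2$ has candidate $2$ as Two-Round winner.
   Context: A ranking is a strict total order on $\{1,\dots,m\}$. A continuous profile consists of the candidate set, total weight $w(P)>0$ and weights $w(p,P)\ge 0$ for each ranking $p$ summing to $w(P)$; profiles are identified with weight vectors in $\mathbb R^{m!}$. For a candidate set $K$, $P_K$ restricts each ranking to $K$ (aggregating weights). Plurality score $s_{\mathrm{Plu}}(c,P)$: total weight of rankings placing $c$ first. Two-Round System: the two candidates with highest Plurality scores in $P$ form $K$, and the winner is the one with higher Plurality score in $P_K$; ties broken by an arbitrary fixed rule. CM (continuous): a rule $f$ is CM in $P$ if there is a continuous profile $Q$ with the same candidates and total weight, $f(Q)\ne f(P)$, and every ranking $p$ with $w(p,Q)<w(p,P)$ prefers $f(Q)$ to $f(P)$. Expected normalized profile $\hat P$: total weight $1$, weight $\theta+\frac{1-\theta}{m!}$ on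 $1\succ\cdots\succ m$ and $\frac{1-\theta}{m!}$ on each other ranking. *)

From HB Require Import structures.
From mathcomp Require Import all_boot all_order all_algebra all_fingroup.
Set Implicit Arguments. Unset Strict Implicit. Unset Printing Implicit Defensive.
Import Order.TTheory GRing.Theory Num.Theory.
Local Open Scope ring_scope.

(* Candidates 1..m of the paper are the ordinals 0..m-1 of 'I_m
   (paper candidate k  <->  ordinal with value k-1).
   A ranking is a permutation s : {perm 'I_m}; s i is the candidate at
   position i (position 0 = top). *)
Definition ranking (m : nat) := {perm 'I_m}.

Definition prefers m (s : ranking m) (a b : 'I_m) : bool :=
  ((s^-1)%g a < (s^-1)%g b)%N.

Definition profile (R : realFieldType) m := ranking m -> R.

Definition total (R : realFieldType) m (P : profile R m) : R :=
  \sum_(s : ranking m) P s.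

Definition valid_profile (R : realFieldType) m (P : profile R m) : Prop :=
  (forall s, 0 <= P s) /\ 0 < total P.

Definition plu (R : realFieldType) m (P : profile R m) (c : 'I_m) : R :=
  \sum_(s : ranking m | ((s^-1)%g c == 0 :> nat)) P s.

Definition plu_restr (R : realFieldType) m (K : {set 'I_m}) (P : profile R m)
    (c : 'I_m) : R :=
  \sum_(s : ranking m | [forall d in K, (d != c) ==> prefers s c d]) P s.

Definition tiebreak m (tb : {set 'I_m} -> 'I_m) : Prop :=
  forall S : {set 'I_m}, S != set0 -> tb S \in S.

Definition trs_first (R : realFieldType) m (tb : {set 'I_m} -> 'I_m)
    (P : profile R m) : 'I_m :=
  tb [set c | [forall d, plu P d <= plu P c]].

Definition trs_second (R : realFieldType) m (tb : {set 'I_m} -> 'I_m)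
    (P : profile R m) : 'I_m :=
  let a := trs_first tb P in
  tb [set c | (c != a) && [forall d, (d != a) ==> (plu P d <= plu P c)]].

Definition trs (R : realFieldType) m (tb : {set 'I_m} -> 'I_m)
    (P : profile R m) : 'I_m :=
  let a := trs_first tb P in
  let b := trs_second tb P in
  let K := [set a; b] in
  if plu_restr K P b < plu_restr K P a then a
  else if plu_restr K P a < plu_restr K P b then b
  else tb K.

Definition CM_witness (R : realFieldType) m (f : profile R m -> 'I_m)
    (P Q : profile R m) : Prop :=
  valid_profile Q /\ total Q = total P /\ f Q != f P /\
  (forall s, Q s < P s -> prefers s (f Q) (f P)).

Definition is_CM (R : realFieldType) m (f : profile R m -> 'I_m)
    (P : profile R m) : Prop :=
  exists Q, CM_witness f P Q.

Definition Phat (R : realFieldType) m (theta : R) : profile R m :=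
  fun s => (if s == 1%g then theta else 0) + (1 - theta) / (m`!)%:R.

Definition rank_2_to_1 m (s : ranking m) : bool :=
  [forall i : 'I_m, val (s i) == ((val i).+1 %% m)%N].
Definition rank_3_to_2 m (s : ranking m) : bool :=
  [forall i : 'I_m, val (s i) == ((val i).+2 %% m)%N].

Definition is_cand m (k : nat) (c : 'I_m) : bool := val c == k.-1.

Definition Qmanip (R : realFieldType) m (theta : R) : profile R m :=
  fun s =>
    (if [exists c1, exists c2, [&& is_cand 1 c1, is_cand 2 c2 & prefers s c2 c1]]
     then 0 else Phat theta s)
    + (if rank_2_to_1 s then (1 - theta) / 2 * (2 * (1 - 2 * theta) / (3 * (1 - theta)))
       else 0)
    + (if rank_3_to_2 s then (1 - theta) / 2 * ((1 + theta) / (3 * (1 - theta)))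
       else 0).

From Pilot Require Import Defs.
From HB Require Import structures.
From mathcomp Require Import all_boot all_order all_algebra all_fingroup.
From mathcomp Require Import ring lra.
Import Order.TTheory GRing.Theory Num.Theory.
Set Implicit Arguments. Unset Strict Implicit. Unset Printing Implicit Defensive.
Local Open Scope ring_scope.

(* Candidate 1 wins in the expected profile: it has the largest plurality score
   and beats every rival head to head.  A manipulation towards w <> 1 may only
   add weight to rankings preferring 1 to w.  If 1 stays a finalist it still
   beats w.  Otherwise both finalists w and c outpoll 1, although 1 keeps its
   plurality score while w and c together get at most the weight of rankings
   preferring w to 1 plus that of rankings preferring 1 to w with c on top.  In
   the expected profile this needs (1-θ)/2 + (1-θ)/(2m) >= 2(θ + (1-θ)/m),
   which fails exactly when θ > (m-3)/(5m-3), with a margin that survives small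
   perturbations.  Below the threshold, in Q the plurality scores rank 2 above
   3 above everyone else, and 2 wins the final duel against 3. *)

Lemma card_preim_inj (T : finType) (f : T -> T) (F : pred T) :
  injective f -> #|[pred x | F (f x)]| = #|F|.
Proof.
move=> f_inj; rewrite -!sum1_card [in RHS](reindex_inj f_inj) /=.
by apply: eq_bigl => x; rewrite inE.
Qed.

Lemma sumr_if_eq (V : nmodType) (T : finType) (S : pred T) (x0 : T) (v : V) :
  \sum_(x | S x) (if x == x0 then v else 0) = if S x0 then v else 0.
Proof.
rewrite -big_mkcondr; case: (boolP (S x0)) => Sx0.
  by rewrite (big_pred1 x0) // => x /=; case: eqVneq => [->|_]; rewrite ?andbT ?andbF.
rewrite big_pred0 // => x /=.
by case: eqVneq => [->|_]; rewrite ?andbT ?andbF ?(negbTE Sx0).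
Qed.

Section Rankings.

Variable m : nat.
Implicit Types (s t : ranking m) (a b c d e x y : 'I_m) (K : {set 'I_m}).

Definition top_of s K c := [forall d in K, (d != c) ==> prefers s c d].

Lemma prefersMr s t x y :
  prefers (s * t)%g x y = prefers s ((t^-1)%g x) ((t^-1)%g y).
Proof. by rewrite /prefers !invMg !permM. Qed.

Lemma invperm_val_eq s x y : ((s^-1)%g x == (s^-1)%g y :> nat) = (x == y).
Proof. by rewrite (inj_eq val_inj) (inj_eq perm_inj). Qed.

Lemma prefers_asym s x y : prefers s x y -> ~~ prefers s y x.
Proof. by rewrite /prefers -leqNgt => /ltnW. Qed.

Lemma prefers_swap s x y : x != y -> prefers s y x = ~~ prefers s x y.
Proof.
move=> nxy; rewrite /prefers -leqNgt ltn_neqAle.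
by rewrite invperm_val_eq eq_sym nxy.
Qed.

Lemma top_of_prefers s K c d : top_of s K c -> d \in K -> d != c -> prefers s c d.
Proof. by move=> /forall_inP top dK ndc; exact: implyP (top d dK) ndc. Qed.

Lemma top_of_uniq s K c d : c \in K -> d \in K ->
  top_of s K c -> top_of s K d -> c = d.
Proof.
move=> cK dK topc topd; apply/eqP/negPn/negP => ncd.
have ndc : d != c by rewrite eq_sym.
move/prefers_asym/negP: (top_of_prefers topc dK ndc); apply.
exact: top_of_prefers topd cK ncd.
Qed.

Lemma top_of_exists s K c : c \in K -> exists2 d, d \in K & top_of s K d.
Proof.
move=> cK; case: (arg_minnP (fun d => val ((s^-1)%g d)) cK) => d dK dmin.
exists d => //; apply/forall_inP => e eK; apply/implyP => ned.
by rewrite /prefers ltn_neqAle dmin // andbT invperm_val_eq eq_sym.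
Qed.

Lemma sum_top_of s K c : c \in K -> \sum_(d in K) (top_of s K d : nat) = 1%N.
Proof.
move=> cK; have [d dK topd] := top_of_exists s cK.
rewrite (bigD1 d) //= topd big1 // => e /andP[eK ned].
apply/eqP; rewrite eqb0; apply: contra ned => tope.
by rewrite (top_of_uniq eK dK tope topd).
Qed.

Lemma top_ofMr s t K c : [set (t^-1)%g x | x in K] = K ->
  top_of (s * t)%g K c = top_of s K ((t^-1)%g c).
Proof.
move=> tK; apply/forall_inP/forall_inP => top e eK; apply/implyP => ne.
  have teK : t e \in K.
    by rewrite -(mem_imset _ _ (@perm_inj _ (t^-1)%g)) permK tK.
  have := implyP (top _ teK); rewrite prefersMr permK; apply.
  by apply: contra ne => /eqP <-; rewrite permK.
rewrite prefersMr; apply: (implyP (top _ _)).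
  by rewrite -tK (mem_imset _ _ perm_inj).
by rewrite (inj_eq perm_inj).
Qed.

Lemma tperm_imset_id K c d : c \in K -> d \in K -> [set tperm c d x | x in K] = K.
Proof.
move=> cK dK; apply/setP => y.
rewrite -[y in LHS](tpermK c d) (mem_imset _ _ (can_inj (tpermK c d))).
by case: tpermP => [->|->|//]; rewrite ?cK ?dK.
Qed.

Lemma top_of_setT s c : top_of s setT c = ((s^-1)%g c == 0%N :> nat).
Proof.
apply/idP/eqP => [top|c0].
  pose z := Ordinal (leq_ltn_trans (leq0n _) (ltn_ord c)).
  case: (eqVneq (s z) c) => [<-|nzc]; first by rewrite permK.
  by have := top_of_prefers top (in_setT (s z)) nzc; rewrite /prefers permK.
apply/forall_inP => d _; apply/implyP => ndc.
by rewrite /prefers c0 lt0n -c0 invperm_val_eq.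
Qed.

Lemma top_of_pair s x y : x != y -> top_of s [set x; y] x = prefers s x y.
Proof.
move=> nxy; apply/idP/idP => [top|pxy].
  by apply: top_of_prefers top _ _; rewrite ?inE ?eqxx ?orbT // eq_sym.
apply/forall_inP => d; rewrite !inE => /orP[]/eqP->; first by rewrite eqxx.
by rewrite eq_sym nxy.
Qed.

Lemma card_top_of (F : pred (ranking m)) K c : c \in K ->
  (forall s d e, d \in K -> e \in K -> F (s * tperm d e)%g = F s) ->
  (#|K| * #|[pred s | F s && top_of s K c]|)%N = #|F|.
Proof.
move=> cK Finv.
have same_card d : d \in K ->
    #|[pred s | F s && top_of s K d]| = #|[pred s | F s && top_of s K c]|.
  move=> dK; rewrite -(card_preim_inj _ (mulIg (tperm c d))); apply: eq_card => s.
  have tK : [set (tperm c d)^-1%g x | x in K] = K by rewrite tpermV tperm_imset_id.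
  by rewrite !inE Finv // top_ofMr // tpermV tpermR.
rewrite -sum_nat_const -(eq_bigr _ same_card) -sum1_card.
transitivity (\sum_(d in K) \sum_(s | F s) (top_of s K d : nat)).
  by apply: eq_bigr => d _; rewrite -sum1_card big_mkcondr.
by rewrite exchange_big; apply: eq_bigr => s _; rewrite (sum_top_of _ cK).
Qed.

Lemma card_top_of_all K c : c \in K ->
  (#|K| * #|[pred s | top_of s K c]|)%N = m`!.
Proof. by move=> cK; rewrite -card_Sn -(card_top_of (F := predT) cK). Qed.

Lemma card_top_of_setT c : (m * #|[pred s | top_of s setT c]|)%N = m`!.
Proof. by rewrite -(card_top_of_all (in_setT c)) cardsT card_ord. Qed.

Lemma card_prefers x y : x != y -> (2 * #|[pred s | prefers s x y]|)%N = m`!.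
Proof.
move=> nxy; rewrite -(card_top_of_all (set21 x y)) cards2 nxy.
by congr (2 * _)%N; apply: eq_card => s; rewrite !inE top_of_pair.
Qed.

Lemma card_prefers_top x y c : x != y -> c != x -> c != y ->
  (2 * #|[pred s | prefers s x y && top_of s setT c]|)%N =
  #|[pred s | top_of s setT c]|.
Proof.
move=> nxy ncx ncy.
have top_inv s d e : d \in [set x; y] -> e \in [set x; y] ->
    top_of (s * tperm d e)%g setT c = top_of s setT c.
  rewrite !inE => dxy exy.
  have ndc : d != c by case/orP: dxy => /eqP->; rewrite eq_sym.
  have nec : e != c by case/orP: exy => /eqP->; rewrite eq_sym.
  have tT : [set (tperm d e)^-1%g z | z in setT] = setT.
    by rewrite tpermV tperm_imset_id.
  by rewrite top_ofMr // tpermV tpermD.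
rewrite -(card_top_of (set21 x y) top_inv) cards2 nxy.
by congr (_ * _)%N; apply: eq_card => s; rewrite !inE top_of_pair // andbC.
Qed.

Lemma prefers1 x y : prefers 1%g x y = (val x < val y)%N.
Proof. by rewrite /prefers invg1 !perm1. Qed.

Definition rev_rank : ranking m := perm (@rev_ord_inj m).

Lemma rev_rankV x : (rev_rank^-1)%g x = rev_ord x.
Proof. by apply: (@perm_inj _ rev_rank); rewrite permKV permE rev_ordK. Qed.

Lemma prefers_rev s x y : prefers (rev_rank * s)%g x y = prefers s y x.
Proof.
rewrite /prefers !invMg !permM !rev_rankV /=.
by rewrite ltn_sub2lE // ltnS; apply: ltn_ord.
Qed.

Definition bottom_of s K c := [forall d in K, (d != c) ==> prefers s d c].

Lemma card_bottom_of K c : c \in K ->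
  (#|K| * #|[pred s | bottom_of s K c]|)%N = m`!.
Proof.
move=> cK; rewrite -(card_top_of_all cK) -(card_preim_inj _ (mulgI rev_rank)).
congr (_ * _)%N; apply: eq_card => s; rewrite !inE.
by apply: eq_forallb => d; rewrite prefers_rev.
Qed.

Definition rot_ord k x : 'I_m :=
  Ordinal (ltn_pmod (x + k) (leq_ltn_trans (leq0n x) (ltn_ord x))).

Lemma rot_ord_inj k : injective (rot_ord k).
Proof.
move=> x y /(congr1 val) /= /eqP; rewrite eqn_modDr => /eqP.
by rewrite !modn_small // => /val_inj.
Qed.

Definition rot_rank k : ranking m := perm (@rot_ord_inj k).

Lemma rot_rankE k s :
  [forall i : 'I_m, val (s i) == ((val i + k) %% m)%N] = (s == rot_rank k).
Proof.
apply/forallP/eqP => [s_rot|-> i]; last by rewrite permE.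
by apply/permP => i; apply: val_inj; rewrite (eqP (s_rot i)) permE.
Qed.

Lemma top_of_rot_rank k c : val c = (k %% m)%N -> top_of (rot_rank k) setT c.
Proof.
move=> ck; pose z := Ordinal (leq_ltn_trans (leq0n _) (ltn_ord c)).
have -> : c = rot_rank k z by apply: val_inj; rewrite permE /= ck.
by rewrite top_of_setT permK.
Qed.

End Rankings.

Definition duel (R : realFieldType) m (P : profile R m) (x y : 'I_m) : R :=
  \sum_(s | prefers s x y) P s.

Section TwoRound.

Variables (R : realFieldType) (m : nat) (tb : {set 'I_m} -> 'I_m).
Hypothesis tb_tiebreak : tiebreak tb.
Implicit Types (P Q : profile R m) (a b c d w x y : 'I_m).

Lemma pluE P c : plu P c = \sum_(s | top_of s setT c) P s.
Proof. by apply: eq_bigl => s; rewrite top_of_setT. Qed.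

Lemma plu_restr_pair P x y : x != y -> plu_restr [set x; y] P x = duel P x y.
Proof. by move=> nxy; apply: eq_bigl => s; rewrite -top_of_pair. Qed.

Lemma total_duel P x y : x != y -> Defs.total P = duel P x y + duel P y x.
Proof.
move=> nxy; rewrite /Defs.total (bigID (fun s => prefers s x y)) /=; congr (_ + _).
by apply: eq_bigl => s; rewrite (prefers_swap _ nxy).
Qed.

Lemma tiebreak_max (D : pred 'I_m) (f : 'I_m -> R) d0 : D d0 ->
  let c := tb [set c | D c && [forall d, D d ==> (f d <= f c)]] in
  D c /\ forall d, D d -> f d <= f c.
Proof.
move=> Dd0; set S := [set c | _]; have : S != set0.
  apply/set0Pn; case: (@real_arg_maxP _ _ d0 D f) => // [d _ | c Dc cmax].
    exact: num_real.
  by exists c; rewrite inE Dc; apply/forall_inP.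
by move/tb_tiebreak; rewrite inE => /andP[Dc /forall_inP cmax].
Qed.

Lemma trs_first_max P d : plu P d <= plu P (trs_first tb P).
Proof. by have [_] := tiebreak_max (plu P) (isT : predT d); apply. Qed.

Lemma trs_second_neq P d : d != trs_first tb P ->
  trs_second tb P != trs_first tb P.
Proof. by move=> nd; have [] := tiebreak_max (D := predC1 _) (plu P) nd. Qed.

Lemma trs_second_max P d : d != trs_first tb P ->
  plu P d <= plu P (trs_second tb P).
Proof. by move=> nd; have [_] := tiebreak_max (D := predC1 _) (plu P) nd; apply. Qed.

Lemma trs_firstE P a : (forall d, d != a -> plu P d < plu P a) ->
  trs_first tb P = a.
Proof.
move=> amax; apply/eqP; apply: contraT => nfa.
by have := amax _ nfa; rewrite ltNge trs_first_max.
Qed.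

Lemma trs_secondE P b : b != trs_first tb P ->
  (forall d, d != trs_first tb P -> d != b -> plu P d < plu P b) ->
  trs_second tb P = b.
Proof.
move=> nbf bmax; apply/eqP; apply: contraT => nsb.
by have := bmax _ (trs_second_neq nbf) nsb; rewrite ltNge trs_second_max.
Qed.

Lemma trs_finalist P : trs tb P \in [set trs_first tb P; trs_second tb P].
Proof.
rewrite /trs; case: ifP => _; first exact: set21.
case: ifP => _; first exact: set22.
by apply: tb_tiebreak; apply/set0Pn; exists (trs_first tb P); apply: set21.
Qed.

Lemma trs_duel P x y :
  x \in [set trs_first tb P; trs_second tb P] ->
  y \in [set trs_first tb P; trs_second tb P] -> y != x ->
  duel P y x < duel P x y -> trs tb P = x.
Proof.
move=> xF yF nyx win.
have [[ex ey]|[ex ey]] : (x = trs_first tb P /\ y = trs_second tb P) \/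
                       (x = trs_second tb P /\ y = trs_first tb P).
  move: xF yF nyx; rewrite !inE => /orP[]/eqP-> /orP[]/eqP->; rewrite ?eqxx //.
  - by left.
  - by right.
- by rewrite /trs -ex -ey plu_restr_pair 1?eq_sym // setUC plu_restr_pair // win.
- rewrite /trs -ex -ey plu_restr_pair // setUC plu_restr_pair 1?eq_sym //.
  by rewrite ltNge (ltW win) win.
Qed.

Lemma plu_le_finalist P x d : x \in [set trs_first tb P; trs_second tb P] ->
  d \notin [set trs_first tb P; trs_second tb P] -> plu P d <= plu P x.
Proof.
rewrite !inE negb_or => /orP[]/eqP-> /andP[ndf _]; first exact: trs_first_max.
exact: trs_second_max.
Qed.

Lemma CM_witness_ge P Q s : CM_witness (trs tb) P Q ->
  prefers s (trs tb P) (trs tb Q) -> P s <= Q s.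
Proof.
move=> [_ [_ [_ manip]]] pref; rewrite leNgt; apply/negP => /manip/prefers_asym.
by rewrite pref.
Qed.

(* Pointwise: a ranking preferring [w] to [a] tops at most one of [w], [c]; one
   preferring [a] to [w] does not top [w] and has [P s <= Q s]. *)
Lemma plu_pair_le P Q a w c :
  (forall s, 0 <= Q s) -> (forall s, prefers s a w -> P s <= Q s) ->
  a != w -> c != w ->
  plu Q w + plu Q c + Defs.total P <=
  duel P w a + \sum_(s | prefers s a w && top_of s setT c) P s + Defs.total Q.
Proof.
move=> Q0 PQ naw ncw; rewrite !pluE /duel /Defs.total.
rewrite !(big_mkcond (fun s => top_of s _ _)).
rewrite (big_mkcond (fun s => prefers s w a)) (big_mkcond (fun s => prefers s a w && _)).
rewrite -!big_split /=.
have nwa : w != a by rewrite eq_sym.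
apply: ler_sum => s _; have Qs0 := Q0 s; rewrite (prefers_swap _ nwa).
case pwa: (prefers s w a) => /=.
  case topw: (top_of s setT w); last by case: ifP => _; lra.
  have /negbTE -> : ~~ top_of s setT c.
    by apply: contra ncw => topc; rewrite (top_of_uniq _ _ topc topw) ?in_setT.
  lra.
have /negbTE -> : ~~ top_of s setT w.
  by apply: contraFN pwa => topw; apply: top_of_prefers topw _ _; rewrite ?in_setT.
have := PQ s; rewrite (prefers_swap _ nwa) pwa => /(_ isT).
by case: ifP => _; lra.
Qed.

Lemma trs_not_CM P a : trs tb P = a ->
  (forall w, w != a -> duel P w a < duel P a w) ->
  (forall w c, w != a -> c != a -> c != w ->
     duel P w a + \sum_(s | prefers s a w && top_of s setT c) P s < 2 * plu P a) ->
  ~ is_CM (trs tb) P.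
Proof.
move=> trsP beats pair_small [Q CMQ]; have [[Q0 _] [totQ [nwa _]]] := CMQ.
move: nwa; rewrite trsP; set w := trs tb Q => nwa.
have naw : a != w by rewrite eq_sym.
have PQ s : prefers s a w -> P s <= Q s by rewrite -trsP; apply: CM_witness_ge.
have wF := trs_finalist Q; rewrite -/w in wF.
have [aF|naF] := boolP (a \in [set trs_first tb Q; trs_second tb Q]).
  have duel_aw : duel P a w <= duel Q a w by apply: ler_sum => s /PQ.
  have := beats w nwa; have := total_duel P nwa; have := total_duel Q nwa.
  rewrite totQ => tot_Q tot_P beats_w.
  have : trs tb Q = a by apply: trs_duel aF wF nwa _; lra.
  by apply/eqP.
have [c cF ncw] : exists2 c, c \in [set trs_first tb Q; trs_second tb Q] & c != w.
  have naf : a != trs_first tb Q by apply: contraNneq naF => ->; apply: set21.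
  have nsf := trs_second_neq naf.
  move: wF; rewrite !inE => /orP[]/eqP->.
    by exists (trs_second tb Q); rewrite ?set22.
  by exists (trs_first tb Q); rewrite ?set21 // eq_sym.
have nca : c != a by apply: contraNneq naF => <-.
have plu_a : plu P a <= plu Q a.
  rewrite !pluE; apply: ler_sum => s topa.
  exact/PQ/(top_of_prefers topa (in_setT w) nwa).
have := plu_pair_le Q0 PQ naw ncw; have := pair_small w c nwa nca ncw.
have := plu_le_finalist wF naF; have := plu_le_finalist cF naF.
rewrite totQ; lra.
Qed.

Lemma trs_plurality_condorcet P a b : b != a ->
  (forall d, d != a -> plu P d < plu P a) ->
  (forall w, w != a -> duel P w a < duel P a w) -> trs tb P = a.
Proof.
move=> nba plu_max beats; have first_a := trs_firstE plu_max.
have nsa : trs_second tb P != a by rewrite -first_a (trs_second_neq (d := b)) ?first_a.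
apply: trs_duel nsa (beats _ nsa); first by rewrite -first_a set21.
exact: set22.
Qed.

End TwoRound.

Lemma ler_dist_sum (R : realFieldType) (T : finType) (S : pred T) (f g : T -> R) e :
  (forall x, `|f x - g x| <= e) ->
  `|\sum_(x | S x) f x - \sum_(x | S x) g x| <= #|T|%:R * e.
Proof.
move=> fg; rewrite -sumrB; apply: le_trans (ler_norm_sum _ _ _) _.
apply: (@le_trans _ _ (\sum_x `|f x - g x|)).
  by rewrite [X in _ <= X](bigID S) /= lerDl sumr_ge0.
by rewrite mulr_natl -sumr_const; apply: ler_sum.
Qed.

Section ExpectedProfile.

Variables (R : realFieldType) (m : nat) (t : R).
Implicit Types (S : pred (ranking m)) (a c d w x y : 'I_m).

Lemma sum_Phat S :
  \sum_(s | S s) Phat t s = (if S 1%g then t else 0) + #|S|%:R * ((1 - t) / (m`!)%:R).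
Proof. by rewrite big_split /= sumr_if_eq mulr_natl -sumr_const. Qed.

Lemma sum_Phat_card S k : (0 < k)%N -> (k * #|[pred s | S s]|)%N = m`! ->
  \sum_(s | S s) Phat t s = (if S 1%g then t else 0) + (1 - t) / k%:R.
Proof.
move=> k0 kS; rewrite sum_Phat; congr (_ + _).
have S0 : (0 < #|[pred s | S s]|)%N.
  by move: (fact_gt0 m); rewrite -kS muln_gt0 => /andP[].
rewrite -kS natrM (_ : #|S| = #|[pred s | S s]|); last exact: eq_card.
by field; rewrite !pnatr_eq0 -!lt0n k0 S0.
Qed.

Lemma Phat_ge0 (s : ranking m) : 0 <= t -> t <= 1 -> 0 <= Phat t s.
Proof.
move=> t0 t1; apply: addr_ge0; first by case: ifP.
by apply: divr_ge0; rewrite ?ler0n // subr_ge0.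
Qed.

Lemma total_Phat : Defs.total (Phat t : profile R m) = 1.
Proof.
rewrite /Defs.total (sum_Phat_card (S := predT) (k := 1)) ?mul1n ?card_Sn //=.
by rewrite divr1 addrC subrK.
Qed.

Lemma valid_Phat : 0 <= t -> t <= 1 -> valid_profile (Phat t : profile R m).
Proof.
by move=> t0 t1; split; [move=> s; apply: Phat_ge0 | rewrite total_Phat ltr01].
Qed.

Variable a : 'I_m.
Hypothesis a_first : is_cand 1 a.

Lemma top_of1 c : top_of 1%g setT c = (c == a).
Proof.
rewrite top_of_setT invg1 perm1; apply/eqP/eqP => [c0|->]; last exact/eqP.
by apply: val_inj; rewrite /= c0 (eqP a_first).
Qed.

Let val_gt0 w : w != a -> (0 < val w)%N.
Proof.
move=> nwa; rewrite lt0n; apply: contra_neq nwa => w0.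
by apply: val_inj; rewrite /= w0 (eqP a_first).
Qed.

Lemma plu_Phat c : plu (Phat t) c = (if c == a then t else 0) + (1 - t) / m%:R.
Proof.
rewrite pluE (sum_Phat_card (k := m)) ?top_of1 ?card_top_of_setT //.
exact: leq_ltn_trans (leq0n _) (ltn_ord a).
Qed.

Lemma duel_Phat_to w : w != a -> duel (Phat t) w a = (1 - t) / 2.
Proof.
move=> nwa; rewrite /duel (sum_Phat_card (k := 2)) ?card_prefers //.
by rewrite prefers1 (eqP a_first) ltn0 add0r.
Qed.

Lemma duel_Phat_from w : w != a -> duel (Phat t) a w = t + (1 - t) / 2.
Proof.
move=> nwa; rewrite /duel (sum_Phat_card (k := 2)) ?card_prefers 1?eq_sym //.
by rewrite prefers1 (eqP a_first) val_gt0.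
Qed.

Lemma sum_Phat_prefers_top w c : w != a -> c != a -> c != w ->
  \sum_(s | prefers s a w && top_of s setT c) Phat t s = (1 - t) / (2 * m)%:R.
Proof.
move=> nwa nca ncw; have m0 : (0 < m)%N := leq_ltn_trans (leq0n _) (ltn_ord a).
rewrite (sum_Phat_card (k := 2 * m)) ?muln_gt0 ?m0 //.
  by rewrite top_of1 (negbTE nca) andbF add0r.
have [naw nac nwc] : [/\ a != w, a != c & w != c].
  by rewrite ![a == _]eq_sym ![_ == c]eq_sym.
by rewrite mulnAC card_prefers_top // mulnC card_top_of_setT.
Qed.

Lemma trs_Phat tb : tiebreak tb -> 0 < t -> (1 < m)%N -> trs tb (Phat t) = a.
Proof.
move=> tbP t0 m1; pose d : 'I_m := Ordinal m1.
have nda : d != a by rewrite -(inj_eq val_inj) /= (eqP a_first).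
apply: (trs_plurality_condorcet tbP nda) => [c nca|w nwa].
  by rewrite !plu_Phat eqxx (negbTE nca); lra.
by rewrite duel_Phat_to // duel_Phat_from //; lra.
Qed.

Lemma trs_not_CM_near_Phat tb (P : profile R m) delta :
  tiebreak tb -> (1 < m)%N -> 0 <= delta -> 4 * delta < t ->
  4 * delta < 2 * (t + (1 - t) / m%:R) - ((1 - t) / 2 + (1 - t) / (2 * m)%:R) ->
  (forall S, `|\sum_(s | S s) P s - \sum_(s | S s) Phat t s| <= delta) ->
  ~ is_CM (trs tb) P.
Proof.
move=> tbP m1 delta0 delta_t delta_gap near.
have near_le S : \sum_(s | S s) Phat t s - delta <= \sum_(s | S s) P s.
  by have := near S; rewrite ler_distl => /andP[].
have near_ge S : \sum_(s | S s) P s <= \sum_(s | S s) Phat t s + delta.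
  by have := near S; rewrite ler_distl => /andP[].
have beats w : w != a -> duel P w a < duel P a w.
  move=> nwa; have := near_ge (fun s => prefers s w a).
  have := near_le (fun s => prefers s a w).
  rewrite -/(duel P w a) -/(duel P a w) -/(duel _ w a) -/(duel _ a w).
  by rewrite duel_Phat_to // duel_Phat_from //; lra.
have d_ne_a : Ordinal m1 != a by rewrite -(inj_eq val_inj) /= (eqP a_first).
apply: (trs_not_CM tbP (a := a)) => // [|w c nwa nca ncw].
  apply: (trs_plurality_condorcet tbP d_ne_a) => // c nca.
  have := near_ge (fun s => top_of s setT c); have := near_le (fun s => top_of s setT a).
  by rewrite -!pluE !plu_Phat eqxx (negbTE nca); lra.
have := near_ge (fun s => prefers s w a); have := near_le (fun s => top_of s setT a).
have := near_ge (fun s => prefers s a w && top_of s setT c).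
rewrite -!pluE -/(duel P w a) -/(duel _ w a) plu_Phat eqxx duel_Phat_to //.
by rewrite sum_Phat_prefers_top //; lra.
Qed.

Lemma not_CM_near_Phat tb : tiebreak tb -> (1 < m)%N -> 0 < t ->
  (m%:R - 3) / (5 * m%:R - 3) < t ->
  exists eps : R, 0 < eps /\ forall P : profile R m, valid_profile P ->
    (forall s, `|P s - Phat t s| < eps) -> ~ is_CM (trs tb) P.
Proof.
move=> tbP m1 t0 above; have m_gt1 : 1 < m%:R :> R by rewrite ltr1n.
pose gap := 2 * (t + (1 - t) / m%:R) - ((1 - t) / 2 + (1 - t) / (2 * m)%:R).
have gap0 : 0 < gap.
  rewrite ltr_pdivrMr in above; last by lra.
  have -> : gap = (t * (5 * m%:R - 3) - (m%:R - 3)) / (2 * m%:R).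
    by rewrite /gap natrM; field; rewrite pnatr_eq0 -lt0n ltnW.
  by apply: divr_gt0; lra.
pose delta := Num.min t gap / 8.
have [delta_t delta_gap] : Num.min t gap <= t /\ Num.min t gap <= gap.
  by apply/andP; rewrite -le_min.
have fact0 : 0 < (m`!)%:R :> R by rewrite ltr0n fact_gt0.
have min0 : 0 < Num.min t gap by rewrite lt_min t0 gap0.
have [delta0 delta_lt_t delta_lt_gap] :
    [/\ 0 < delta, 4 * delta < t & 4 * delta < gap] by rewrite /delta; split; lra.
exists (delta / (m`!)%:R); split => [|P _ near]; first exact: divr_gt0.
apply: (trs_not_CM_near_Phat (delta := delta)) => //; first exact: ltW.
move=> S; have := ler_dist_sum S (fun s => ltW (near s)).
by rewrite card_Sn mulrC divfK // gt_eqF.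
Qed.

End ExpectedProfile.

Section ManipulatedProfile.

Variables (R : realFieldType) (m : nat) (t : R) (a b c : 'I_m).
Hypotheses (a_first : is_cand 1 a) (b_second : is_cand 2 b) (c_third : is_cand 3 c).
Hypotheses (t_pos : 0 < t) (t_below : t < (m%:R - 3) / (5 * m%:R - 3)).
Implicit Types (S : pred (ranking m)) (d : 'I_m).
Local Notation Q := (@Qmanip R m t).

Let a_val : val a = 0%N. Proof. exact/eqP. Qed.
Let b_val : val b = 1%N. Proof. exact/eqP. Qed.
Let c_val : val c = 2%N. Proof. exact/eqP. Qed.
Let m_gt2 : (2 < m)%N. Proof. by rewrite -c_val ltn_ord. Qed.

Let m_ge3 : 3 <= m%:R :> R. Proof. by rewrite (ler_nat R 3 m). Qed.

Let t_lt_fifth : 5 * t < 1.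
Proof. by have m3 := m_ge3; move: t_below; rewrite ltr_pdivlMr; nra. Qed.

Let margin_pos : 0 < (m%:R - 3 - t * (5 * m%:R - 3)) / m%:R.
Proof.
have m3 := m_ge3; move: t_below; rewrite ltr_pdivlMr; last by lra.
by move=> below; apply: divr_gt0; lra.
Qed.

Let neq_ord d d' : val d != val d' -> d != d'.
Proof. by apply: contra => /eqP->. Qed.
Let nba : b != a. Proof. by rewrite neq_ord // a_val b_val. Qed.
Let nca : c != a. Proof. by rewrite neq_ord // a_val c_val. Qed.
Let ncb : c != b. Proof. by rewrite neq_ord // b_val c_val. Qed.
Let nab : a != b. Proof. by rewrite eq_sym. Qed.
Let nbc : b != c. Proof. by rewrite eq_sym. Qed.

Lemma prefers_cands s :
  [exists c1, exists c2, [&& is_cand 1 c1, is_cand 2 c2 & prefers s c2 c1]] =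
  prefers s b a.
Proof.
apply/existsP/idP => [[c1 /existsP[c2 /and3P[/eqP c1a /eqP c2b]]]|pba].
  have -> : c1 = a by apply: val_inj; rewrite c1a a_val.
  by have -> : c2 = b by apply: val_inj; rewrite c2b b_val.
by exists a; apply/existsP; exists b; rewrite a_first b_second.
Qed.

Lemma QmanipE s : Q s =
  (if prefers s a b then Phat t s else 0) +
  (if s == rot_rank m 1 then (1 - 2 * t) / 3 else 0) +
  (if s == rot_rank m 2 then (1 + t) / 6 else 0).
Proof.
have t1 : 1 - t != 0 by have := t_lt_fifth; rewrite subr_eq0 => ?; apply/eqP; lra.
have rot1 : rank_2_to_1 s = (s == rot_rank m 1).
  by rewrite -rot_rankE; apply: eq_forallb => i; rewrite addn1.
have rot2 : rank_3_to_2 s = (s == rot_rank m 2).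
  by rewrite -rot_rankE; apply: eq_forallb => i; rewrite addn2.
have share1 : (1 - t) / 2 * (2 * (1 - 2 * t) / (3 * (1 - t))) = (1 - 2 * t) / 3.
  by field.
have share2 : (1 - t) / 2 * ((1 + t) / (3 * (1 - t))) = (1 + t) / 6 by field.
by rewrite /Qmanip prefers_cands (prefers_swap s nba) if_neg rot1 rot2 share1 share2.
Qed.

Lemma sum_Qmanip S : \sum_(s | S s) Q s =
  \sum_(s | S s && prefers s a b) Phat t s +
  (if S (rot_rank m 1) then (1 - 2 * t) / 3 else 0) +
  (if S (rot_rank m 2) then (1 + t) / 6 else 0).
Proof.
rewrite (eq_bigr _ (fun s _ => QmanipE s)) big_split /= big_split /=.
by rewrite -big_mkcondr !sumr_if_eq.
Qed.

Let top_rot1 : top_of (rot_rank m 1) setT b.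
Proof. by apply: top_of_rot_rank; rewrite b_val modn_small // ltnW. Qed.

Let top_rot2 : top_of (rot_rank m 2) setT c.
Proof. by apply: top_of_rot_rank; rewrite c_val modn_small. Qed.

Let top_ofF s d d' : top_of s setT d -> d != d' -> top_of s setT d' = false.
Proof.
move=> topd; apply: contraNF => topd'.
by rewrite (top_of_uniq (in_setT d) (in_setT d') topd topd').
Qed.

Lemma total_Qmanip : Defs.total Q = 1.
Proof.
by rewrite /Defs.total sum_Qmanip -/(duel _ a b) (duel_Phat_from t a_first) //=; lra.
Qed.

Lemma plu_Qmanip_a : plu Q a = t + (1 - t) / m%:R.
Proof.
rewrite pluE sum_Qmanip (top_ofF top_rot1 nba) (top_ofF top_rot2 nca).
rewrite !addr0 (_ : t + _ = plu (Phat t) a); last by rewrite (plu_Phat t a_first) eqxx.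
rewrite pluE; apply: eq_bigl => s.
by case topa: (top_of s setT a); rewrite //= (top_of_prefers topa) ?in_setT.
Qed.

Lemma plu_Qmanip_b : plu Q b = (1 - 2 * t) / 3.
Proof.
rewrite pluE sum_Qmanip top_rot1 (top_ofF top_rot2 ncb) addr0 big_pred0 ?add0r //.
move=> s; case topb: (top_of s setT b) => //=.
by rewrite (prefers_swap _ nba) (top_of_prefers topb (in_setT a) nab).
Qed.

Lemma plu_Qmanip_other d : d != a -> d != b ->
  plu Q d = (1 - t) / (2 * m)%:R + (if d == c then (1 + t) / 6 else 0).
Proof.
move=> nda ndb; have nbd : b != d by rewrite eq_sym.
rewrite pluE sum_Qmanip (top_ofF top_rot1 nbd) addr0.
have -> : top_of (rot_rank m 2) setT d = (d == c).
  by case: eqVneq => [->|ndc]; rewrite ?top_rot2 // (top_ofF top_rot2) // eq_sym.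
congr (_ + _); rewrite -(sum_Phat_prefers_top t a_first nba nda ndb).
by apply: eq_bigl => s; rewrite andbC.
Qed.

Lemma duel_Qmanip_cb : duel Q c b = (1 - t) / 3 + (1 + t) / 6.
Proof.
have pcb1 : prefers (rot_rank m 1) c b = false.
  by rewrite (prefers_swap _ nbc) (top_of_prefers top_rot1 (in_setT c) ncb).
rewrite /duel sum_Qmanip pcb1 (top_of_prefers top_rot2) ?in_setT // addr0.
have bottom_b s : prefers s c b && prefers s a b = bottom_of s [set a; b; c] b.
  apply/andP/forall_inP => [[pcb pab] d|bot].
    by rewrite !inE => /orP[/orP[]|]/eqP->; rewrite ?eqxx ?pab ?pcb ?implybT.
  split; [have := bot c | have := bot a]; rewrite !inE eqxx ?orbT => /(_ isT).
    by rewrite ncb.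
  by rewrite nab.
have card3 : #|[set a; b; c]| = 3%N.
  by rewrite setUC cardsU1 cards2 !inE negb_or nca ncb nab.
rewrite (eq_bigl _ _ bottom_b) (sum_Phat_card t (k := 3)) //.
  by rewrite -bottom_b !prefers1 a_val b_val c_val /= add0r.
by rewrite -card3 card_bottom_of // !inE eqxx orbT.
Qed.

Lemma trs_Qmanip tb : tiebreak tb -> trs tb Q = b.
Proof.
move=> tbP; have m3 := m_ge3; have t0 := t_pos.
have m0 : m%:R != 0 :> R by rewrite gt_eqF //; lra.
have [margin [margin0 a_below_b c_below_b]] : exists margin, [/\ 0 < margin,
    t + (1 - t) / m%:R = (1 - 2 * t) / 3 - margin / 3 :> R &
    (1 - t) / (2 * m)%:R + (1 + t) / 6 = (1 - 2 * t) / 3 - margin / 6 :> R].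
  exists ((m%:R - 3 - t * (5 * m%:R - 3)) / m%:R).
  by split; [exact: margin_pos | field | rewrite natrM; field].
have first_b : trs_first tb Q = b.
  apply: (trs_firstE tbP) => d ndb; rewrite plu_Qmanip_b.
  case: (eqVneq d a) => [->|nda]; first by rewrite plu_Qmanip_a; lra.
  by rewrite plu_Qmanip_other //; case: ifP => _; lra.
have second_c : trs_second tb Q = c.
  apply: (trs_secondE tbP); rewrite first_b // => d ndb ndc.
  rewrite (plu_Qmanip_other nca ncb) eqxx.
  case: (eqVneq d a) => [->|nda]; first by rewrite plu_Qmanip_a; lra.
  by rewrite plu_Qmanip_other // (negbTE ndc); lra.
apply: (trs_duel (y := c)); rewrite ?first_b ?second_c ?set21 ?set22 //.
by have := total_duel Q nbc; rewrite total_Qmanip duel_Qmanip_cb; lra.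
Qed.

Lemma Qmanip_CM_witness tb : tiebreak tb -> CM_witness (trs tb) (Phat t) Q.
Proof.
move=> tbP; have t0 := t_pos; have t5 := t_lt_fifth.
have Phat0 (s : ranking m) : 0 <= Phat t s by apply: Phat_ge0; lra.
have share1 : 0 <= (1 - 2 * t) / 3 by lra.
have share2 : 0 <= (1 + t) / 6 by lra.
rewrite /CM_witness trs_Qmanip // (trs_Phat a_first tbP t0 (ltnW m_gt2)).
rewrite total_Qmanip total_Phat; split; [split=> [s|] | split=> //; split=> // s].
- by rewrite QmanipE; have := Phat0 s; case: ifP; case: ifP; case: ifP => _ _ _; lra.
- by rewrite total_Qmanip ltr01.
- rewrite (prefers_swap _ nab) QmanipE; case: (prefers s a b) => //=.
  by case: ifP; case: ifP => _ _; lra.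
Qed.

End ManipulatedProfile.

Theorem mainTheorem8 (R : realFieldType) (m : nat) (theta : R)
    (tb : {set 'I_m} -> 'I_m) :
  (3 <= m)%N -> 0 < theta -> theta <= 1 -> tiebreak tb ->
  is_cand 1 (trs tb (Phat theta))
  /\ (((m%:R - 3) / (5 * m%:R - 3) < theta) ->
        ~ is_CM (trs tb) (Phat theta) /\
        exists eps : R, 0 < eps /\
          forall P : profile R m, valid_profile P ->
            (forall s, `|P s - Phat theta s| < eps) ->
            ~ is_CM (trs tb) P)
  /\ ((theta < (m%:R - 3) / (5 * m%:R - 3)) ->
        is_CM (trs tb) (Phat theta) /\
        CM_witness (trs tb) (Phat theta) (Qmanip theta) /\
        is_cand 2 (trs tb (Qmanip theta))).
Proof.
move=> m_gt2 theta0 theta1 tbP; have m_gt1 := ltnW m_gt2; have m_gt0 := ltnW m_gt1.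
pose a : 'I_m := Ordinal m_gt0; pose b : 'I_m := Ordinal m_gt1.
pose c : 'I_m := Ordinal m_gt2.
have [a1 b2 c3] : [/\ is_cand 1 a, is_cand 2 b & is_cand 3 c] by [].
split; first by rewrite (trs_Phat a1 tbP theta0 m_gt1).
split => [above | below].
  have [eps [eps0 near]] := not_CM_near_Phat a1 tbP m_gt1 theta0 above.
  split; last by exists eps.
  apply: near => [|s]; first exact: valid_Phat (ltW theta0) theta1.
  by rewrite subrr normr0.
have witness := Qmanip_CM_witness a1 b2 c3 theta0 below tbP.
split; first by exists (Qmanip theta).
by split; last by rewrite (trs_Qmanip a1 b2 c3 theta0 below tbP).
Qed.
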